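(* Let $0<\gamma<\frac12$, $0\le\delta\le1$, and let $m\ge2$ be an integer. Then $$F(1,\gamma,\delta)+F(m+1,\gamma)<F(2,\gamma)+F(m,\gamma).$$
   Context: Logarithms base 2; $h$ is binary entropy; $\|u\|$ is Hamming weight. For real $m\ge2$ and $\gamma\in(0,\frac12)$, $F(m,\gamma)=\min_{x\in(0,1)}\big[\log((1+x)^m+(1-x)^m)-m\gamma\log x-1\big]$. For an integer $m\ge1$, $\gamma\in(0,\frac12)$, $\delta\in[0,1]$, let $H^*(m,\gamma,\delta)$ be the maximum entropy of a probability distribution $Q$ on $\mathbb{F}_2^m$ with $\Pr_{u\sim Q}(u_i=1)=\gamma$ for all $i$ and $\Pr_{u\sim Q}(\|u\|\text{ odd})=\delta$; $F(m,\gamma,\delta)=H^*(m,\gamma,\delta)-h(\delta)$ if such $Q$ exists, and $-\infty$ otherwise. *)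

From Stdlib Require Import Reals Lra Lia Arith Bool ClassicalEpsilon.
Open Scope R_scope.

Definition log2 (x : R) : R := ln x / ln 2.

(* x log2 x with the convention 0 log 0 = 0 *)
Definition plogp (x : R) : R := if Rle_dec x 0 then 0 else x * log2 x.

Definition hbin (d : R) : R := - plogp d - plogp (1 - d).

Fixpoint sumN (n : nat) (f : nat -> R) : R :=
  match n with
  | O => 0
  | S n' => sumN n' f + f n'
  end.

(* Elements of F_2^m are encoded as naturals k < 2^m; coordinate i
   (0 <= i < m) of k is the i-th binary digit of k. *)
Definition bit (k i : nat) : bool := Nat.testbit k i.

Fixpoint hweight (m k : nat) : nat :=
  match m with
  | O => O
  | S m' => hweight m' k + (if bit k m' then 1 else 0)
  end.

(* A probability distribution Q on F_2^m (values outside [0,2^m) ignored) *)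
Definition is_distr (m : nat) (Q : nat -> R) : Prop :=
  (forall k, (k < 2 ^ m)%nat -> 0 <= Q k) /\ sumN (2 ^ m) Q = 1.

Definition entropy (m : nat) (Q : nat -> R) : R :=
  - sumN (2 ^ m) (fun k => plogp (Q k)).

Definition feasible (m : nat) (g d : R) (Q : nat -> R) : Prop :=
  is_distr m Q /\
  (forall i, (i < m)%nat ->
     sumN (2 ^ m) (fun k => if bit k i then Q k else 0) = g) /\
  sumN (2 ^ m) (fun k => if Nat.odd (hweight m k) then Q k else 0) = d.

Definition is_max_entropy (m : nat) (g d H : R) : Prop :=
  (exists Q, feasible m g d Q /\ entropy m Q = H) /\
  (forall Q, feasible m g d Q -> entropy m Q <= H).

(* F(m,gamma,delta) as an extended real: None stands for -infinity. *)
Definition F3 (m : nat) (g d : R) : option R :=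
  epsilon (inhabits None)
    (fun o => match o with
              | None => ~ (exists Q, feasible m g d Q)
              | Some v => exists H, is_max_entropy m g d H /\ v = H - hbin d
              end).

Definition Fobj (m g x : R) : R :=
  log2 (Rpower (1 + x) m + Rpower (1 - x) m) - m * g * log2 x - 1.

Definition F2 (m g : R) : R :=
  epsilon (inhabits 0)
    (fun v => (exists x, 0 < x < 1 /\ Fobj m g x = v) /\
              (forall x, 0 < x < 1 -> v <= Fobj m g x)).

(* F(1, g, d) is 0 whenever it is finite: on F_2 the marginal g forces Q = (1 - g, g) and
   d = g.  Since ln (1 + u) - g ln u >= h(g) ln 2, with equality at the odds u = g / (1 - g),
   F(2, g) = h(g).  For the inequality let x minimise F(m, .) and choose z with
   z^(m+1) = x^m u.  Expanding by parity, splitting C(m+1, i) by Pascal's rule and applying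
   weighted AM-GM termwise gives
     (1+z)^(m+1) + (1-z)^(m+1) <= (1+x)^m (1+u) + (1-x)^m (1-u) < ((1+x)^m + (1-x)^m) (1+u),
   whose logarithm reads F(m+1, g) <= obj(z) < F(m, g) + h(g).  The minima exist because the
   objective blows up at 0, tends to m - 1 at 1 and, as g < 1/2, is below m - 1 somewhere. *)

From Stdlib Require Import Reals Lra Lia Classical ClassicalEpsilon.
Open Scope R_scope.

Lemma ln_le a b : 0 < a -> a <= b -> ln a <= ln b.
Proof.
  intros Ha [Hab | <-]; [now apply Rlt_le, ln_increasing | apply Rle_refl].
Qed.

Lemma ln_le_sub1 u : 0 < u -> ln u <= u - 1.
Proof. intros Hu. pose proof (exp_ineq1_le (ln u)) as H. rewrite exp_ln in H; lra. Qed.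

Lemma ln_lt_0 x : 0 < x < 1 -> ln x < 0.
Proof. intros Hx. rewrite <- ln_1. apply ln_increasing; lra. Qed.

Lemma ln2_pos : 0 < ln 2.
Proof. pose proof ln_lt_2. lra. Qed.

Lemma pow_exp w k : exp w ^ k = exp (INR k * w).
Proof.
  rewrite <- (exp_ln (exp w ^ k)) by apply pow_lt, exp_pos.
  now rewrite ln_pow, ln_exp by apply exp_pos.
Qed.

Lemma pow_exp_ln x k : 0 < x -> x ^ k = exp (INR k * ln x).
Proof. intros Hx. now rewrite <- pow_exp, exp_ln. Qed.

Lemma exp_weighted_le a b p q : 0 <= a -> 0 <= b -> 0 < a + b ->
  (a + b) * exp ((a * p + b * q) / (a + b)) <= a * exp p + b * exp q.
Proof.
  intros Ha Hb Hab. set (c := (a * p + b * q) / (a + b)).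
  assert (tangent : forall t, exp c * (1 + (t - c)) <= exp t).
  { intros t. replace (exp t) with (exp c * exp (t - c)) by (rewrite <- exp_plus; f_equal; ring).
    apply Rmult_le_compat_l; [apply Rlt_le, exp_pos | apply exp_ineq1_le]. }
  pose proof (Rmult_le_compat_l a _ _ Ha (tangent p)).
  pose proof (Rmult_le_compat_l b _ _ Hb (tangent q)).
  assert (Hc : (a + b) * c = a * p + b * q) by (unfold c; field; lra).
  assert (E : a * (exp c * (1 + (p - c))) + b * (exp c * (1 + (q - c)))
              = (a + b) * exp c + exp c * (a * p + b * q - (a + b) * c)) by ring.
  rewrite Hc, Rminus_diag, Rmult_0_r, Rplus_0_r in E. lra.
Qed.

Lemma C_pos n k : 0 < C n k.
Proof.
  unfold C. apply Rdiv_lt_0_compat; [|apply Rmult_lt_0_compat]; apply INR_fact_lt_0.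
Qed.

Lemma C_n0 n : C n 0 = 1.
Proof. unfold C. rewrite Nat.sub_0_r. simpl. pose proof (INR_fact_lt_0 n). field. lra. Qed.

Lemma C_nn n : C n n = 1.
Proof. unfold C. rewrite Nat.sub_diag. simpl. pose proof (INR_fact_lt_0 n). field. lra. Qed.

Lemma C_succ_mul n j : (j < n)%nat -> C n (S j) * INR (S j) = C n j * (INR n - INR j).
Proof.
  intros Hj. rewrite pascal_step3, minus_INR by lia.
  pose proof (lt_0_INR (S j) ltac:(lia)). field. lra.
Qed.

Lemma binom_parity k y s :
  (1 + y) ^ k + s * (1 - y) ^ k = sum_f_R0 (fun i => (1 + s * (-1) ^ i) * (C k i * y ^ i)) k.
Proof.
  replace (1 + y) with (y + 1) by ring. replace (1 - y) with (-1 * y + 1) by ring.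
  rewrite !binomial, scal_sum, <- plus_sum. apply sum_eq. intros i _.
  rewrite !pow1, Rpow_mult_distr. ring.
Qed.

(* Weighted AM-GM with the weights C n (S j) / C (S n) (S j) = (n - j) / (n + 1)
   and C n j / C (S n) (S j) = (j + 1) / (n + 1). *)
Lemma binom_term_le n j x l : (j < n)%nat -> 0 < x -> 0 < l ->
  C (S n) (S j) * exp ((INR n * ln x + ln l) / (INR n + 1)) ^ S j
  <= C n (S j) * x ^ S j + l * (C n j * x ^ j).
Proof.
  intros Hj Hx Hl.
  pose proof (C_succ_mul n j Hj) as Hrel.
  pose proof (C_pos n j). pose proof (C_pos n (S j)).
  set (a := C n (S j)) in *. set (b := C n j) in *.
  set (p := INR (S j) * ln x). set (q := INR j * ln x + ln l).
  assert (Hjn : INR j + 1 <= INR n) by (rewrite <- S_INR; apply le_INR; lia).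
  assert (Ha : a = b * (INR n - INR j) / (INR j + 1)).
  { rewrite S_INR in Hrel. apply (Rmult_eq_reg_r (INR j + 1)); [|pose proof (pos_INR j); lra].
    rewrite Hrel. field. pose proof (pos_INR j); lra. }
  assert (Hexp : INR (S j) * ((INR n * ln x + ln l) / (INR n + 1)) = (a * p + b * q) / (a + b)).
  { unfold p, q. rewrite Ha, S_INR. pose proof (pos_INR j). field.
    repeat split; apply Rgt_not_eq; nra. }
  rewrite <- pascal, pow_exp, Hexp by lia. fold a b.
  replace (b + a) with (a + b) by ring.
  replace (x ^ S j) with (exp p) by (unfold p; now rewrite pow_exp_ln).
  replace (l * (b * x ^ j)) with (b * exp q)
    by (unfold q; rewrite exp_plus, exp_ln, <- pow_exp_ln by lra; ring).
  apply exp_weighted_le; lra.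
Qed.

Lemma sum_shift f N : sum_f_R0 f (S N) = f 0%nat + sum_f_R0 (fun j => f (S j)) N.
Proof. now rewrite decomp_sum by lia. Qed.

Lemma sign_pow_ge0 i : 0 <= 1 + (-1) ^ i.
Proof.
  pose proof (pow_1_abs i) as H.
  destruct (Rcase_abs ((-1) ^ i)); [rewrite Rabs_left in H | rewrite Rabs_right in H]; lra.
Qed.

Lemma binom_succ_le n x l : 0 < x -> 0 < l ->
  let z := exp ((INR n * ln x + ln l) / (INR n + 1)) in
  (1 + z) ^ S n + (1 - z) ^ S n <= (1 + x) ^ n * (1 + l) + (1 - x) ^ n * (1 - l).
Proof.
  intros Hx Hl z.
  assert (Hzn : z ^ S n = x ^ n * l).
  { unfold z. rewrite pow_exp, S_INR, <- (exp_ln (x ^ n * l))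
      by (apply Rmult_lt_0_compat; [apply pow_lt|]; lra).
    rewrite ln_mult, ln_pow by (try apply pow_lt; lra).
    f_equal. pose proof (pos_INR n). field. lra. }
  replace ((1 + z) ^ S n + (1 - z) ^ S n) with ((1 + z) ^ S n + 1 * (1 - z) ^ S n) by ring.
  replace ((1 + x) ^ n * (1 + l) + (1 - x) ^ n * (1 - l))
    with ((1 + x) ^ n + 1 * (1 - x) ^ n + l * ((1 + x) ^ n + -1 * (1 - x) ^ n)) by ring.
  rewrite !binom_parity.
  (* Pair the term of degree j + 1 on the left with those of degrees j + 1 and j on the right;
     the constant terms agree and the top one is z ^ S n = x ^ n * l. *)
  destruct n as [|p].
  { simpl in *. repeat rewrite C_n0. lra. }
  rewrite sum_shift, tech5, C_n0, C_nn, Hzn.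
  rewrite (sum_shift _ p), C_n0.
  rewrite (tech5 _ p), C_nn.
  assert (Hterms : sum_f_R0 (fun j => (1 + 1 * (-1) ^ S j) * (C (S (S p)) (S j) * z ^ S j)) p
    <= sum_f_R0 (fun j => (1 + 1 * (-1) ^ S j) * (C (S p) (S j) * x ^ S j)) p
       + l * sum_f_R0 (fun j => (1 + -1 * (-1) ^ j) * (C (S p) j * x ^ j)) p).
  { rewrite scal_sum, <- plus_sum. apply sum_Rle. intros j Hj.
    replace (1 + -1 * (-1) ^ j) with (1 + 1 * (-1) ^ S j) by (simpl; ring).
    rewrite Rmult_1_l, Rmult_assoc, (Rmult_comm _ l), <- Rmult_plus_distr_l.
    apply Rmult_le_compat_l; [apply sign_pow_ge0|].
    apply binom_term_le; [lia | assumption | assumption]. }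
  assert (Htop : (1 + 1 * (-1) ^ S (S p)) * (1 * (x ^ S p * l))
                 = l * ((1 + -1 * (-1) ^ S p) * (1 * x ^ S p))) by (simpl; ring).
  rewrite !pow_O. lra.
Qed.

Lemma hbin_ln g : 0 < g < 1 -> hbin g * ln 2 = - (g * ln g) - (1 - g) * ln (1 - g).
Proof.
  intros Hg. unfold hbin, plogp, log2.
  destruct (Rle_dec g 0); [lra|]. destruct (Rle_dec (1 - g) 0); [lra|].
  pose proof ln2_pos. field. lra.
Qed.

(* Concavity of ln at the weights 1 - g, g and the points 1 / (1 - g), u / g. *)
Lemma hbin_ln_le g u : 0 < g < 1 -> 0 < u -> hbin g * ln 2 <= ln (1 + u) - g * ln u.
Proof.
  intros Hg Hu. rewrite hbin_ln by exact Hg.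
  pose proof (exp_weighted_le (1 - g) g (- ln (1 - g)) (ln u - ln g)
    ltac:(lra) ltac:(lra) ltac:(lra)) as H.
  replace (1 - g + g) with 1 in H by ring.
  rewrite Rdiv_1_r, Rmult_1_l, exp_Ropp, exp_ln in H by lra.
  replace (exp (ln u - ln g)) with (u / g) in H
    by (unfold Rminus; rewrite exp_plus, exp_Ropp, !exp_ln by lra; reflexivity).
  replace ((1 - g) * / (1 - g) + g * (u / g)) with (1 + u) in H by (field; lra).
  apply ln_le in H; [|apply exp_pos]. rewrite ln_exp in H. lra.
Qed.

Lemma hbin_ln_odds g : 0 < g < 1 -> hbin g * ln 2 = ln (1 + g / (1 - g)) - g * ln (g / (1 - g)).
Proof.
  intros Hg. rewrite hbin_ln by exact Hg.
  replace (1 + g / (1 - g)) with (/ (1 - g)) by (field; lra).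
  unfold Rdiv. rewrite ln_mult, !ln_Rinv by (try apply Rinv_0_lt_compat; lra). ring.
Qed.

Lemma odds_lt_1 g : 0 < g < 1 / 2 -> 0 < g / (1 - g) < 1.
Proof.
  intros Hg. split; [apply Rdiv_lt_0_compat; lra|].
  apply (Rmult_lt_reg_r (1 - g)); [lra|]. unfold Rdiv. rewrite Rmult_assoc, Rinv_l; lra.
Qed.

Definition lnF (n : nat) (g x : R) : R := ln ((1 + x) ^ n + (1 - x) ^ n) - INR n * g * ln x.

Lemma Fobj_lnF n g x : 0 < x < 1 -> Fobj (INR n) g x = lnF n g x / ln 2 - 1.
Proof.
  intros Hx. unfold Fobj, lnF, log2. rewrite !Rpower_pow by lra.
  pose proof ln2_pos. field. lra.
Qed.

Lemma binom_pair_ge1 n x : 0 < x < 1 -> 1 <= (1 + x) ^ n + (1 - x) ^ n.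
Proof.
  intros Hx. pose proof (pow_R1_Rle (1 + x) n ltac:(lra)).
  pose proof (pow_le (1 - x) n ltac:(lra)). lra.
Qed.

Lemma lnF_continuous n g x : 0 < x < 1 -> continuity_pt (lnF n g) x.
Proof.
  intros Hx. unfold lnF.
  assert (Hln : forall y, 0 < y -> continuity_pt ln y)
    by (intros y Hy; apply derivable_continuous_pt; exists (/ y); now apply derivable_pt_lim_ln).
  reg; apply Hln; [lra |]. pose proof (binom_pair_ge1 n x Hx). lra.
Qed.

Lemma lnF_ge_near0 n g x : 0 < x < 1 -> - (INR n * g * ln x) <= lnF n g x.
Proof.
  intros Hx. unfold lnF.
  assert (0 <= ln ((1 + x) ^ n + (1 - x) ^ n))
    by (rewrite <- ln_1; apply ln_le; [lra | now apply binom_pair_ge1]).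
  lra.
Qed.

Lemma lnF_ge_near1 n g x : 0 <= g -> 0 < x < 1 -> INR n * ln (1 + x) <= lnF n g x.
Proof.
  intros Hg Hx. unfold lnF. rewrite <- ln_pow by lra.
  assert (ln ((1 + x) ^ n) <= ln ((1 + x) ^ n + (1 - x) ^ n)).
  { apply ln_le; [apply pow_lt; lra|]. pose proof (pow_le (1 - x) n ltac:(lra)). lra. }
  assert (0 <= INR n * g * - ln x).
  { pose proof (ln_lt_0 x Hx). pose proof (pos_INR n).
    apply Rmult_le_pos; [apply Rmult_le_pos|]; lra. }
  lra.
Qed.

(* lnF n g tends to n ln 2 at 1, and its slope there is n (1/2 - g) > 0. *)
Lemma lnF_lt_near1 n g : (2 <= n)%nat -> 0 < g < 1 / 2 ->
  exists x, 0 < x < 1 /\ lnF n g x < INR n * ln 2.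
Proof.
  intros Hn Hg. set (e := (1 / 2 - g) / 2).
  assert (He : 0 < e < 1 / 4) by (unfold e; lra).
  exists (1 - e). split; [lra|].
  assert (HnR : 2 <= INR n) by (replace 2 with (INR 2) by (simpl; ring); now apply le_INR).
  unfold lnF. replace (1 + (1 - e)) with (2 - e) by ring. replace (1 - (1 - e)) with e by ring.
  assert (Hsum : ln ((2 - e) ^ n + e ^ n) <= INR n * ln (2 - e) + e ^ 2).
  { assert (Hen : e ^ n <= e ^ 2).
    { replace n with (2 + (n - 2))%nat by lia. rewrite pow_add.
      pose proof (pow_le e (n - 2) ltac:(lra)). pose proof (pow_incr e 1 (n - 2) ltac:(lra)).
      rewrite pow1 in *. assert (0 < e ^ 2) by (apply pow_lt; lra). nra. }
    assert (H2e : 1 <= (2 - e) ^ n) by (apply pow_R1_Rle; lra).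
    assert (Hpos : 0 < (2 - e) ^ n + e ^ n) by (pose proof (pow_lt e n ltac:(lra)); lra).
    assert (Hle : (2 - e) ^ n + e ^ n <= (2 - e) ^ n * (1 + e ^ 2)) by nra.
    apply ln_le in Hle; [|exact Hpos].
    rewrite ln_mult, ln_pow in Hle by (try apply pow_lt; simpl; nra).
    pose proof (ln_le_sub1 (1 + e ^ 2) ltac:(simpl; nra)). lra. }
  assert (Hln2e : ln (2 - e) <= ln 2 - e / 2).
  { replace (2 - e) with (2 * (1 - e / 2)) by field. rewrite ln_mult by lra.
    pose proof (ln_le_sub1 (1 - e / 2) ltac:(lra)). lra. }
  assert (Hln1e : - ln (1 - e) <= e / (1 - e)).
  { rewrite <- ln_Rinv by lra.
    pose proof (ln_le_sub1 (/ (1 - e)) ltac:(apply Rinv_0_lt_compat; lra)).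
    replace (e / (1 - e)) with (/ (1 - e) - 1) by (field; lra). lra. }
  assert (Hslope : INR n * g * (e / (1 - e)) < INR n * (e / 2) - e ^ 2).
  { replace (INR n * g * (e / (1 - e))) with (INR n * g * e / (1 - e)) by (field; lra).
    apply (Rmult_lt_reg_r (1 - e)); [lra|].
    unfold Rdiv. rewrite Rmult_assoc, Rinv_l, Rmult_1_r by lra.
    replace g with (1 / 2 - 2 * e) by (unfold e; lra). simpl. nra. }
  assert (INR n * g * - ln (1 - e) <= INR n * g * (e / (1 - e)))
    by (apply Rmult_le_compat_l; [apply Rmult_le_pos|]; lra).
  nra.
Qed.

Lemma continuous_min_open_unit (f : R -> R) x0 a b :
  0 < a <= x0 -> x0 <= b < 1 ->
  (forall x, a <= x <= b -> continuity_pt f x) ->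
  (forall x, 0 < x <= a -> f x0 <= f x) ->
  (forall x, b <= x < 1 -> f x0 <= f x) ->
  exists t, 0 < t < 1 /\ forall x, 0 < x < 1 -> f t <= f x.
Proof.
  intros Ha Hb Hcont Hnear0 Hnear1.
  destruct (continuity_ab_min f a b ltac:(lra) Hcont) as [t [Hmin Ht]].
  exists t. split; [lra|]. intros x Hx.
  assert (f t <= f x0) by (apply Hmin; lra).
  destruct (Rle_dec x a); [specialize (Hnear0 x); lra|].
  destruct (Rle_dec b x); [specialize (Hnear1 x); lra|].
  apply Hmin; lra.
Qed.

Lemma lnF_has_min n g : (2 <= n)%nat -> 0 < g < 1 / 2 ->
  exists t, 0 < t < 1 /\ forall x, 0 < x < 1 -> lnF n g t <= lnF n g x.
Proof.
  intros Hn Hg.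
  destruct (lnF_lt_near1 n g Hn Hg) as [x0 [Hx0 Hf0]].
  set (f0 := lnF n g x0) in *.
  assert (HnR : 0 < INR n) by (apply lt_0_INR; lia).
  pose proof ln2_pos.
  set (a := Rmin x0 (exp (- f0 / (INR n * g)))).
  set (b := Rmax x0 (exp (f0 / INR n) - 1)).
  assert (Ha : 0 < a <= x0) by (split; [apply Rmin_pos; [lra | apply exp_pos] | apply Rmin_l]).
  assert (Hb : x0 <= b < 1).
  { split; [apply Rmax_l|]. apply Rmax_lub_lt; [lra|].
    assert (exp (f0 / INR n) < exp (ln 2)).
    { apply exp_increasing. apply (Rmult_lt_reg_r (INR n)); [lra|].
      unfold Rdiv. rewrite Rmult_assoc, Rinv_l; lra. }
    rewrite exp_ln in H0; lra. }
  apply (continuous_min_open_unit (lnF n g) x0 a b Ha Hb).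
  - intros x Hx. apply lnF_continuous. lra.
  - intros x Hx. pose proof (lnF_ge_near0 n g x ltac:(lra)) as Hge.
    assert (Hlog : ln x <= - f0 / (INR n * g)).
    { rewrite <- (ln_exp (- f0 / (INR n * g))). apply ln_le; [lra|].
      apply Rle_trans with a; [lra | apply Rmin_r]. }
    apply Ropp_le_contravar, (Rmult_le_compat_l (INR n * g)) in Hlog; [|apply Rmult_le_pos; lra].
    replace (INR n * g * - (- f0 / (INR n * g))) with f0 in Hlog by (field; lra).
    fold f0. lra.
  - intros x Hx. pose proof (lnF_ge_near1 n g x ltac:(lra) ltac:(lra)) as Hge.
    assert (Hlog : f0 / INR n <= ln (1 + x)).
    { rewrite <- (ln_exp (f0 / INR n)). apply ln_le; [apply exp_pos|].
      assert (exp (f0 / INR n) - 1 <= b) by apply Rmax_r. lra. }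
    apply (Rmult_le_compat_l (INR n)) in Hlog; [|lra].
    replace (INR n * (f0 / INR n)) with f0 in Hlog by (field; lra).
    fold f0. lra.
Qed.

Lemma F2_spec n g : (2 <= n)%nat -> 0 < g < 1 / 2 ->
  (exists x, 0 < x < 1 /\ Fobj (INR n) g x = F2 (INR n) g) /\
  (forall x, 0 < x < 1 -> F2 (INR n) g <= Fobj (INR n) g x).
Proof.
  intros Hn Hg. unfold F2. apply epsilon_spec.
  destruct (lnF_has_min n g Hn Hg) as [t [Ht Hmin]].
  exists (Fobj (INR n) g t). split; [now exists t|].
  intros x Hx. rewrite !Fobj_lnF by assumption.
  pose proof ln2_pos.
  apply Rplus_le_compat_r, Rmult_le_compat_r; [apply Rlt_le, Rinv_0_lt_compat; lra | auto].
Qed.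

Lemma lnF_two g x : 0 < x -> lnF 2 g x = ln 2 + (ln (1 + x ^ 2) - g * ln (x ^ 2)).
Proof.
  intros Hx. unfold lnF.
  replace ((1 + x) ^ 2 + (1 - x) ^ 2) with (2 * (1 + x ^ 2)) by ring.
  rewrite ln_mult, !ln_pow by (try apply pow_lt; simpl; nra). simpl INR. ring.
Qed.

Lemma F2_two g : 0 < g < 1 / 2 -> F2 2 g = hbin g.
Proof.
  intros Hg. pose proof ln2_pos.
  assert (Fobj_two : forall x, 0 < x < 1 ->
            Fobj (INR 2) g x * ln 2 = ln (1 + x ^ 2) - g * ln (x ^ 2)).
  { intros x Hx. rewrite Fobj_lnF, lnF_two by lra. field. lra. }
  replace 2 with (INR 2) by (simpl; ring).
  destruct (F2_spec 2 g (le_n 2) Hg) as [[x1 [Hx1 <-]] Hmin].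
  pose proof (odds_lt_1 g Hg) as Hodds.
  set (x0 := sqrt (g / (1 - g))).
  assert (Hx0 : 0 < x0 < 1).
  { split; [now apply sqrt_lt_R0|]. rewrite <- sqrt_1. apply sqrt_lt_1; lra. }
  assert (Hx02 : x0 ^ 2 = g / (1 - g)) by (apply pow2_sqrt; lra).
  apply Rle_antisym; apply (Rmult_le_reg_r (ln 2)); try lra.
  - apply Rle_trans with (Fobj (INR 2) g x0 * ln 2); [apply Rmult_le_compat_r; auto with real |].
    rewrite Fobj_two, Hx02, hbin_ln_odds by lra. lra.
  - rewrite Fobj_two by assumption. apply hbin_ln_le; [lra | apply pow_lt; lra].
Qed.

Lemma lnF_succ_lt m g x : 0 < g < 1 / 2 -> 0 < x < 1 ->
  exists z, 0 < z < 1 /\ lnF (S m) g z < lnF m g x + hbin g * ln 2.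
Proof.
  intros Hg Hx.
  pose proof (odds_lt_1 g Hg) as Hl. set (l := g / (1 - g)) in *.
  set (w := (INR m * ln x + ln l) / (INR m + 1)).
  pose proof (pos_INR m).
  assert (Hw : w < 0).
  { pose proof (ln_lt_0 x Hx). pose proof (ln_lt_0 l Hl).
    unfold w. apply Rdiv_neg_pos; nra. }
  set (z := exp w).
  (* z ^ S m = x ^ m * l, see binom_succ_le *)
  assert (Hz : 0 < z < 1) by (split; [apply exp_pos | rewrite <- exp_0; now apply exp_increasing]).
  exists z. split; [exact Hz|].
  pose proof (binom_succ_le m x l ltac:(lra) ltac:(lra)) as Hbin.
  cbv zeta in Hbin. fold w z in Hbin.
  assert (Hpm : 0 < (1 - x) ^ m) by (apply pow_lt; lra).
  assert (Hpp : 0 < (1 + x) ^ m) by (apply pow_lt; lra).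
  assert (Hlt : (1 + z) ^ S m + (1 - z) ^ S m < ((1 + x) ^ m + (1 - x) ^ m) * (1 + l)) by nra.
  apply ln_increasing in Hlt.
  2: { pose proof (pow_lt (1 + z) (S m) ltac:(lra)).
       pose proof (pow_le (1 - z) (S m) ltac:(lra)). lra. }
  rewrite ln_mult in Hlt by lra.
  unfold lnF. replace (ln z) with w by (unfold z; now rewrite ln_exp).
  rewrite S_INR, hbin_ln_odds by lra. fold l.
  replace ((INR m + 1) * g * w) with (g * (INR m * ln x + ln l)) by (unfold w; field; lra).
  lra.
Qed.

Lemma feasible_one g d Q : feasible 1 g d Q -> d = g /\ entropy 1 Q = hbin g.
Proof.
  intros [[_ Hsum] [Hmarg Hpar]]. specialize (Hmarg 0%nat ltac:(lia)).
  simpl in *. unfold entropy, hbin. simpl.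
  replace (Q 1%nat) with g by lra. replace (Q 0%nat) with (1 - g) by lra. split; [lra | ring].
Qed.

Lemma F3_one g d a : F3 1 g d = Some a -> a = 0.
Proof.
  intros E. unfold F3 in E.
  match type of E with epsilon ?i ?P = _ => pose proof (epsilon_spec i P) as Hspec end.
  rewrite E in Hspec. cbv beta in Hspec.
  destruct Hspec as [H [[[Q [HQ <-]] _] ->]].
  - destruct (classic (exists Q, feasible 1 g d Q)) as [[Q HQ] | Hnone]; [|now exists None].
    exists (Some (entropy 1 Q - hbin d)), (entropy 1 Q). split; [|reflexivity].
    split; [now exists Q|].
    intros Q' HQ'. apply feasible_one in HQ as [_ ->]. apply feasible_one in HQ' as [_ ->]. lra.
  - apply feasible_one in HQ as [-> ->]. ring.
Qed.

Theorem mainTheorem18 (m : nat) (g d : R) :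
  (2 <= m)%nat -> 0 < g < 1 / 2 -> 0 <= d <= 1 ->
  match F3 1 g d with
  | None => True
  | Some a => a + F2 (INR (m + 1)) g < F2 2 g + F2 (INR m) g
  end.
Proof.
  intros Hm Hg _.
  destruct (F3 1 g d) as [a|] eqn:E; [|exact I].
  rewrite (F3_one g d a E), F2_two by exact Hg.
  destruct (F2_spec m g Hm Hg) as [[x [Hx <-]] _].
  destruct (F2_spec (m + 1) g ltac:(lia) Hg) as [_ Hmin].
  destruct (lnF_succ_lt m g x Hg Hx) as [z [Hz Hlt]].
  specialize (Hmin z Hz). rewrite Nat.add_1_r in *.
  rewrite !Fobj_lnF in * by assumption.
  pose proof ln2_pos.
  apply (Rmult_lt_compat_r (/ ln 2)) in Hlt; [|now apply Rinv_0_lt_compat].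
  rewrite Rmult_plus_distr_r, Rmult_assoc, Rinv_r, Rmult_1_r in Hlt by lra.
  unfold Rdiv in *. lra.
Qed.
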